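(* Let $M_{1/2} := \mathbb{N}_0[\frac12]$. If an irreducible polynomial $P(x) \in \mathbb{Z}[x]$ is not atomic in the monoid algebra $\mathbb{Q}[M_{1/2}]$, then $P(x)$ has a splitting sequence whose binary string contains infinitely many copies of $S$.
   Context: $\mathbb{Q}[M_{1/2}]$ is the domain of polynomial expressions with rational coefficients and nonnegative dyadic rational exponents; an element is atomic if it is a unit or a finite product of irreducibles. Splitting sequence: for an irreducible $P(x) \in \mathbb{Z}[x]$, a sequence $(P_n(x))_{n \ge 0}$ in $\mathbb{Z}[x]$ with $P_0 = P$ such that for each $n \ge 0$: if $P_n$ is irreducible in $\mathbb{Z}[x]$, then $P_{n+1}(x) = P_n(x^2)$ (the square lifting); if $P_n$ is reducible, then (as $n \ge 1$, $P_{n-1}$ is irreducible and $P_n(x) = P_{n-1}(x^2)$, which factors in $\mathbb{Z}[x]$ as a product of exactly two irreducible polynomials) $P_{n+1}$ is one of these two irreducible factors (a splitting of $P_n$). The binary string of the sequence is $s_0 s_1 s_2 \ldots$ where $s_n = L$ if $P_n$ is irreducible in $\mathbb{Z}[x]$ and $s_n = S$ otherwise. *)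

From HB Require Import structures.
From mathcomp Require Import all_boot all_order all_algebra.
Set Implicit Arguments. Unset Strict Implicit. Unset Printing Implicit Defensive.
Import Order.TTheory GRing.Theory Num.Theory.
Local Open Scope ring_scope.

Definition irreducibleZ (p : {poly int}) : Prop :=
  [/\ p != 0, p \isn't a GRing.unit &
      forall q r : {poly int}, p = q * r ->
        q \is a GRing.unit \/ r \is a GRing.unit].

(* An element is represented by a pair (n, p) with p : {poly rat}; it stands
   for p(x^(1/2^n)).  Every element of Q[M_{1/2}] has such a representation,
   and (n, p) and (n+k, p(x^(2^k))) denote the same element. *)
Definition QM := (nat * {poly rat})%type.

Definition liftp (k : nat) (p : {poly rat}) : {poly rat} := p \Po 'X^(2 ^ k).

Definition QM_eq (a b : QM) : Prop :=
  let N := maxn a.1 b.1 in liftp (N - a.1) a.2 = liftp (N - b.1) b.2.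

Definition QM_mul (a b : QM) : QM :=
  let N := maxn a.1 b.1 in (N, liftp (N - a.1) a.2 * liftp (N - b.1) b.2).

Definition QM_one : QM := (0%N, 1).
Definition QM_zero : QM := (0%N, 0).

Definition QM_unit (a : QM) : Prop := exists b, QM_eq (QM_mul a b) QM_one.

Definition QM_irreducible (a : QM) : Prop :=
  [/\ ~ QM_eq a QM_zero, ~ QM_unit a &
      forall b c, QM_eq a (QM_mul b c) -> QM_unit b \/ QM_unit c].

Definition QM_prod (s : seq QM) : QM := foldr QM_mul QM_one s.

Definition QM_atomic (a : QM) : Prop :=
  QM_unit a \/
  exists s : seq QM, (forall i, (i < size s)%N -> QM_irreducible (nth QM_one s i)) /\
                     QM_eq a (QM_prod s).

Definition QM_of_intpoly (P : {poly int}) : QM := (0%N, map_poly intr P).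

Definition splitting_sequence (P : {poly int}) (Ps : nat -> {poly int}) : Prop :=
  Ps 0%N = P /\
  forall n : nat,
    (irreducibleZ (Ps n) -> Ps n.+1 = Ps n \Po 'X^2) /\
    (~ irreducibleZ (Ps n) ->
       exists q r : {poly int}, [/\ irreducibleZ q, irreducibleZ r,
                                    Ps n = q * r & Ps n.+1 = q]).

Definition letter_is_S (Ps : nat -> {poly int}) (n : nat) : Prop :=
  ~ irreducibleZ (Ps n).

From HB Require Import structures.
From mathcomp Require Import all_boot all_order all_algebra.
From mathcomp Require Import zify ring.
From Stdlib Require Import Classical IndefiniteDescription.
Set Implicit Arguments. Unset Strict Implicit. Unset Printing Implicit Defensive.
Import Order.TTheory GRing.Theory Num.Theory.
Local Open Scope ring_scope.

(* Along the splitting sequence we keep a term that is not atomic in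
   Q[M_{1/2}].  Squaring the variable preserves this because x |-> x^(1/2) is
   an automorphism of Q[M_{1/2}]; splitting preserves it for one of the two
   factors because a product of atomic non-units is atomic.  The sequence is
   well defined: if f is irreducible in Z[x] but f(x^2) is not, then by the
   irreducibility of f over Q every non-unit factor of f(x^2) has degree at
   least deg f, so f(x^2) is a product of exactly two irreducibles.  If all
   letters from some index on were L, the term Q there would have every
   Q(x^(2^k)) irreducible in Z[x], hence in Q[x]; since any factorization in
   Q[M_{1/2}] lives in some Q[x^(1/2^k)], Q would be irreducible, hence atomic. *)

Lemma liftp0 p : liftp 0 p = p.
Proof. by rewrite /liftp expn0 expr1 comp_polyXr. Qed.

Lemma liftpD a b p : liftp a (liftp b p) = liftp (a + b) p.
Proof. by rewrite /liftp -comp_polyA comp_Xn_poly -exprM -expnD addnC. Qed.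

Lemma liftpM k p q : liftp k (p * q) = liftp k p * liftp k q.
Proof. exact: comp_polyM. Qed.

Lemma liftp_eq0 k p : (liftp k p == 0) = (p == 0).
Proof. by rewrite /liftp comp_poly_eq0 // size_polyXn ltnS expn_gt0. Qed.

Lemma liftp_inj k : injective (liftp k).
Proof.
move=> p q /eqP; rewrite -subr_eq0 /liftp -comp_polyB -/(liftp k _) liftp_eq0.
by rewrite subr_eq0 => /eqP.
Qed.

Lemma size_liftp_eq1 k p : (size (liftp k p) == 1%N) = (size p == 1%N).
Proof.
have := size_comp_poly p ('X^(2 ^ k)); rewrite size_polyXn -/(liftp k p).
have := liftp_eq0 k p; rewrite -!size_poly_eq0.
have : (0 < 2 ^ k)%N by rewrite expn_gt0.
case: (size p) => [|[|n]]; case: (size (liftp k p)) => [|[|m]] //=; nia.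
Qed.

(* Truncated subtraction: [QM_at a M] is the polynomial representing [a] at
   level [M] only when [a.1 <= M]. *)
Definition QM_at (a : QM) (M : nat) : {poly rat} := liftp (M - a.1) a.2.

Lemma QM_at_lift a N M : (a.1 <= N <= M)%N -> QM_at a M = liftp (M - N) (QM_at a N).
Proof. by move=> /andP[aN NM]; rewrite /QM_at liftpD; congr liftp; lia. Qed.

Lemma QM_eqP a b :
  QM_eq a b <-> forall M, (a.1 <= M)%N -> (b.1 <= M)%N -> QM_at a M = QM_at b M.
Proof.
split=> [ab M aM bM|ab]; last by apply: ab; [apply: leq_maxl|apply: leq_maxr].
rewrite (@QM_at_lift a (maxn a.1 b.1)) ?leq_maxl ?geq_max ?aM ?bM //.
by rewrite (@QM_at_lift b (maxn a.1 b.1)) ?leq_maxr ?geq_max ?aM ?bM // [QM_at a _]ab.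
Qed.

Lemma QM_eq_at a b M : (a.1 <= M)%N -> (b.1 <= M)%N -> QM_at a M = QM_at b M -> QM_eq a b.
Proof.
move=> aM bM ab; apply: (@liftp_inj (M - maxn a.1 b.1)).
by rewrite -!/(QM_at _ _) -!QM_at_lift ?leq_maxl ?leq_maxr ?geq_max ?aM ?bM.
Qed.

Lemma QM_eq_refl a : QM_eq a a.
Proof. by []. Qed.

Lemma QM_eq_sym a b : QM_eq a b -> QM_eq b a.
Proof. by rewrite /QM_eq maxnC => ->. Qed.

Lemma QM_eq_trans a b c : QM_eq a b -> QM_eq b c -> QM_eq a c.
Proof.
move=> /QM_eqP ab /QM_eqP bc; apply: (@QM_eq_at _ _ (maxn a.1 (maxn b.1 c.1))); try lia.
by rewrite ab ?bc //; lia.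
Qed.

Lemma QM_at_mul a b M : (a.1 <= M)%N -> (b.1 <= M)%N ->
  QM_at (QM_mul a b) M = QM_at a M * QM_at b M.
Proof.
by move=> aM bM; rewrite /QM_at /= liftpM !liftpD; congr (liftp _ _ * liftp _ _); lia.
Qed.

Lemma QM_at1 M : QM_at QM_one M = 1.
Proof. by rewrite /QM_at /liftp comp_polyC. Qed.

Lemma QM_mul_congr a b a' b' : QM_eq a a' -> QM_eq b b' -> QM_eq (QM_mul a b) (QM_mul a' b').
Proof.
move=> /QM_eqP aa' /QM_eqP bb'.
apply: (@QM_eq_at _ _ (maxn (maxn a.1 b.1) (maxn a'.1 b'.1))) => /=; try lia.
by rewrite !QM_at_mul ?aa' ?bb' //; lia.
Qed.

Lemma QM_mulA a b c : QM_eq (QM_mul (QM_mul a b) c) (QM_mul a (QM_mul b c)).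
Proof.
apply: (@QM_eq_at _ _ (maxn a.1 (maxn b.1 c.1))) => /=; try lia.
by rewrite !QM_at_mul ?mulrA //=; lia.
Qed.

Lemma QM_mul1r a : QM_eq (QM_mul a QM_one) a.
Proof.
by apply: (@QM_eq_at _ _ a.1) => /=; rewrite ?maxn0 // QM_at_mul // QM_at1 mulr1.
Qed.

Lemma QM_mul1l a : QM_eq (QM_mul QM_one a) a.
Proof.
by apply: (@QM_eq_at _ _ a.1) => /=; rewrite ?max0n // QM_at_mul // QM_at1 mul1r.
Qed.

Lemma QM_eq0P a : QM_eq a QM_zero <-> a.2 = 0.
Proof. by rewrite /QM_eq maxn0 subnn liftp0 /liftp comp_poly0. Qed.

Lemma QM_unitP a : QM_unit a <-> (size a.2 == 1%N).
Proof.
split=> [[b /QM_eqP/(_ (maxn a.1 b.1))]|a1].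
  rewrite QM_at_mul ?leq_maxl ?leq_maxr // QM_at1 => /(_ (leqnn _) isT) ab1.
  rewrite -(size_liftp_eq1 (maxn a.1 b.1 - a.1)) -/(QM_at a _).
  by have := size_mul_eq1 (QM_at a (maxn a.1 b.1)) (QM_at b (maxn a.1 b.1));
    rewrite ab1 size_poly1 eqxx => /esym/andP[].
have /size1_polyC a2C : (size a.2 <= 1)%N by rewrite (eqP a1).
have a0 : a.2`_0 != 0 by apply: contraTneq a1 => a0; rewrite a2C a0 size_poly0.
exists (0%N, (a.2`_0)^-1%:P); apply: (@QM_eq_at _ _ a.1) => /=; rewrite ?maxn0 //.
by rewrite QM_at_mul // QM_at1 /QM_at subnn liftp0 /liftp comp_polyC {1}a2C -polyCM mulfV.
Qed.

Lemma QM_unit_eq a a' : QM_eq a a' -> QM_unit a -> QM_unit a'.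
Proof.
move=> aa' [b ab]; exists b; apply: QM_eq_trans ab.
exact: QM_mul_congr (QM_eq_sym aa') (QM_eq_refl b).
Qed.

Lemma QM_atomic_eq a a' : QM_eq a a' -> QM_atomic a -> QM_atomic a'.
Proof.
move=> aa' [aU|[s [s_irr as_]]]; first by left; apply: QM_unit_eq aa' aU.
by right; exists s; split=> //; apply: QM_eq_trans (QM_eq_sym aa') as_.
Qed.

Lemma QM_atomic_irreducible a : QM_irreducible a -> QM_atomic a.
Proof.
move=> a_irr; right; exists [:: a]; split; first by case.
exact: QM_eq_sym (QM_mul1r a).
Qed.

Lemma QM_prod_cat s t : QM_eq (QM_prod (s ++ t)) (QM_mul (QM_prod s) (QM_prod t)).
Proof.
elim: s => [|x s IH] /=; first exact: QM_eq_sym (QM_mul1l _).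
exact: QM_eq_trans (QM_mul_congr (QM_eq_refl x) IH) (QM_eq_sym (QM_mulA _ _ _)).
Qed.

Lemma QM_atomic_mul a b : QM_atomic a -> QM_atomic b -> ~ QM_unit a -> ~ QM_unit b ->
  QM_atomic (QM_mul a b).
Proof.
move=> [//|[s [s_irr as_]]] [//|[t [t_irr bt]]] _ _; right; exists (s ++ t); split.
  move=> i; rewrite size_cat nth_cat; case: (ltnP i (size s)) => [/s_irr //|si it].
  by apply: t_irr; lia.
exact: QM_eq_trans (QM_mul_congr as_ bt) (QM_eq_sym (QM_prod_cat _ _)).
Qed.

(* The automorphism x |-> x^(1/2) of Q[M_{1/2}]: the same polynomial, read one
   level finer. Its inverse sends (n, p) to (n, liftp 1 p). *)
Definition QM_sqrtx (a : QM) : QM := (a.1.+1, a.2).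

Lemma QM_at_sqrtx a M : QM_at (QM_sqrtx a) M.+1 = QM_at a M.
Proof. by rewrite /QM_at subSS. Qed.

Lemma QM_sqrtx_mul a b : QM_sqrtx (QM_mul a b) = QM_mul (QM_sqrtx a) (QM_sqrtx b).
Proof. by rewrite /QM_sqrtx /QM_mul /= maxnSS !subSS. Qed.

Lemma QM_sqrtx_eq a b : QM_eq a b -> QM_eq (QM_sqrtx a) (QM_sqrtx b).
Proof. by rewrite /QM_eq /= maxnSS !subSS. Qed.

Lemma QM_sqrtx_eq_inv a b : QM_eq (QM_sqrtx a) (QM_sqrtx b) -> QM_eq a b.
Proof. by rewrite /QM_eq /= maxnSS !subSS. Qed.

Lemma QM_sqrtx_liftp1 a : QM_eq (QM_sqrtx (a.1, liftp 1 a.2)) a.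
Proof.
apply: (@QM_eq_at _ _ a.1.+1) => //.
by rewrite QM_at_sqrtx /QM_at /= subnn liftp0 subSn // subnn.
Qed.

Lemma QM_sqrtx_one : QM_eq (QM_sqrtx QM_one) QM_one.
Proof. by apply: (@QM_eq_at _ _ 1) => //; rewrite QM_at_sqrtx !QM_at1. Qed.

Lemma QM_sqrtx_irreducible a : QM_irreducible a -> QM_irreducible (QM_sqrtx a).
Proof.
move=> [a0 aU a_irr]; split.
- by move/QM_eq0P => /= /QM_eq0P.
- by move/QM_unitP => /= /QM_unitP.
- move=> b c /QM_eq_trans/(_ (QM_mul_congr (QM_eq_sym (QM_sqrtx_liftp1 b))
                                           (QM_eq_sym (QM_sqrtx_liftp1 c)))).
  rewrite -QM_sqrtx_mul => /QM_sqrtx_eq_inv/a_irr.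
  by rewrite !QM_unitP /= !size_liftp_eq1 -!QM_unitP.
Qed.

Lemma QM_sqrtx_atomic a : QM_atomic a -> QM_atomic (QM_sqrtx a).
Proof.
move=> [/QM_unitP aU|[s [s_irr as_]]]; first by left; apply/QM_unitP.
right; exists (map QM_sqrtx s); split.
  move=> i; rewrite size_map => si; rewrite (nth_map QM_one) //.
  exact: QM_sqrtx_irreducible (s_irr _ si).
apply: QM_eq_trans (QM_sqrtx_eq as_) _.
elim: s {s_irr as_} => [|x s IH] /=; first exact: QM_sqrtx_one.
by rewrite QM_sqrtx_mul; apply: QM_mul_congr.
Qed.

Lemma QM_atomic_liftp1 p : QM_atomic (0%N, liftp 1 p) -> QM_atomic (0%N, p).
Proof. by move/QM_sqrtx_atomic; apply: QM_atomic_eq (QM_sqrtx_liftp1 (0%N, p)). Qed.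

Section CompX2Field.
Variable K : fieldType.
Implicit Types F h : {poly K}.

Lemma irredp_mul_size1 F h e : irreducible_poly F -> F = h * e ->
  size h = 1%N \/ size e = 1%N.
Proof.
move=> F_irr Fhe; have := irredp_neq0 F_irr.
rewrite Fhe mulf_eq0 negb_or => /andP[h0 e0].
have [|h1] := eqVneq (size h) 1%N; [by left | right].
have /eqp_size : h %= F by apply: F_irr h1 _; rewrite Fhe dvdp_mulr.
rewrite Fhe size_mul //; move: h0 e0; rewrite -!size_poly_gt0.
by move: (size h) (size e) => m n; lia.
Qed.

(* h(x) h(-x) = u(x^2) with size u = size h; u cannot be coprime to F, since
   h is not coprime to F(x^2), so the irreducible F divides u. *)
Lemma irredp_size_le_dvdp_comp_X2 F h : irreducible_poly F -> h %| F \Po 'X^2 ->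
  (1 < size h)%N -> (size F <= size h)%N.
Proof.
move=> F_irr hF h1.
have h0 : h != 0 by rewrite -size_poly_gt0; lia.
set hN := h \Po - 'X.
have size_hN : size hN = size h by rewrite size_comp_poly2 // size_polyN size_polyX.
have hN0 : hN != 0 by rewrite -size_poly_eq0 size_hN size_poly_eq0.
set E := even_poly h; set O := odd_poly h.
set u := E * E - 'X * (O * O).
have hhN : h * hN = u \Po 'X^2.
  rewrite /hN -{1 2}(poly_even_odd h) comp_polyD comp_polyM comp_polyX -!comp_polyA.
  rewrite comp_Xn_poly sqrrN /u comp_polyB !comp_polyM comp_polyX -/E -/O.
  ring.
have u0 : u != 0 by apply: contraNneq (mulf_neq0 h0 hN0) => u0; rewrite hhN u0 comp_poly0.
have size_u : size u = size h.
  have := size_comp_poly u 'X^2; rewrite -hhN size_polyXn size_mul // size_hN.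
  move: h1 u0; rewrite -size_poly_eq0; case: (size u) => // n; case: (size h) => //; lia.
have uF : ~~ coprimep u F.
  apply/negP => /(coprimep_comp_poly 'X^2)/coprimepP/(_ h).
  rewrite -hhN dvdp_mulr // => /(_ isT hF)/eqp_size.
  by rewrite size_poly1 => h_1; rewrite h_1 in h1.
have [gcd1|] := irredp_XsubCP F_irr (dvdp_gcdr u F).
  by move: uF; rewrite coprimep_def (eqp_size gcd1) size_poly1.
move=> /andP[_ /dvdp_trans/(_ (dvdp_gcdl u F)) Fu].
by rewrite -size_u dvdp_leq.
Qed.

End CompX2Field.

Lemma size_poly_unit (R : idomainType) (p : {poly R}) : p \is a GRing.unit -> size p = 1%N.
Proof. by rewrite poly_unitE => /andP[/eqP]. Qed.

Lemma even_poly_comp_X2 (R : nzRingType) (p : {poly R}) : even_poly (p \Po 'X^2) = p.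
Proof.
apply/polyP => i; rewrite coef_even_poly coef_comp_poly_Xn //.
by rewrite -muln2 dvdn_mull // mulnK.
Qed.

Lemma irreducibleZ_irredp_rat (f : {poly int}) : irreducibleZ f -> (1 < size f)%N ->
  irreducible_poly (map_poly (intr : int -> rat) f).
Proof.
move=> [_ _ f_irr] f1; split; first by rewrite size_rat_int_poly.
move=> q q1 /dvdpP_rat_int [p [a a0 qp] [r fpr]]; subst q.
have [/size_poly_unit p1|/size_poly_unit r1] := f_irr _ _ fpr.
  by move: q1; rewrite size_scale // size_rat_int_poly p1.
have /size1_polyC rC : (size r <= 1)%N by rewrite r1.
have r0 : r`_0 != 0 by apply: contra_eqN r1 => /eqP r0; rewrite rC r0 size_poly0.
rewrite fpr rC rmorphM /= map_polyC /= mulrC mul_polyC.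
apply: eqp_trans (eqp_scale _ a0) _; rewrite eqp_sym eqp_scale //.
by rewrite intr_eq0.
Qed.

Definition splits_in_two (R : {poly int}) : Prop :=
  exists q r, [/\ irreducibleZ q, irreducibleZ r, R = q * r,
                  (1 < size q)%N & (1 < size r)%N].

Section CompX2.
Variable f : {poly int}.
Hypotheses (f_irr : irreducibleZ f) (f_nonconst : (1 < size f)%N).
Local Notation g := (f \Po 'X^2).

Lemma comp_X2_neq0 : g != 0.
Proof. by rewrite comp_poly_eq0 ?size_polyXn //; case: f_irr. Qed.

(* Taking even parts in g = d * e shows that a constant factor d also divides f. *)
Lemma nonunit_factor_nonconst d e : g = d * e -> d \isn't a GRing.unit -> (1 < size d)%N.
Proof.
move=> gde dU; rewrite ltnNge; apply/negP => d1.
have f_de : f = d * even_poly e.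
  by rewrite -(even_poly_comp_X2 f) gde (size1_polyC d1) !mul_polyC even_polyZ.
have [_ _ /(_ _ _ f_de)[|/size_poly_unit e1]] := f_irr; first exact/negP.
by move: f_nonconst (size_polyMleq d (even_poly e)); rewrite -f_de e1; lia.
Qed.

Lemma size_nonunit_factor d e : g = d * e -> d \isn't a GRing.unit -> (size f <= size d)%N.
Proof.
move=> gde dU; have d1 := nonunit_factor_nonconst gde dU.
rewrite -(size_rat_int_poly f) -(size_rat_int_poly d).
apply: irredp_size_le_dvdp_comp_X2; rewrite ?size_rat_int_poly //.
  exact: irreducibleZ_irredp_rat.
have -> : map_poly intr f \Po 'X^2 = map_poly (intr : int -> rat) g.
  by rewrite map_comp_poly /= map_polyXn.
by rewrite gde rmorphM dvdp_mulr.
Qed.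

Lemma size_comp_X2 : size g = (size f).*2.-1.
Proof.
have := size_comp_poly f 'X^2; rewrite size_polyXn /=.
have := comp_X2_neq0; rewrite -size_poly_eq0; have := f_nonconst.
by move: (size g) (size f) => m n; lia.
Qed.

Lemma nonunit_factor_irreducible d e : g = d * e -> d \isn't a GRing.unit ->
  size d = size f -> irreducibleZ d.
Proof.
move=> gde dU df.
have d0 : d != 0 by apply: contraNneq _ comp_X2_neq0 => d0; rewrite gde d0 mul0r.
split=> // a b dab; apply: NNPP => /not_or_and[/negP aU /negP bU].
have /size_nonunit_factor/(_ aU) fa : g = a * (b * e) by rewrite gde dab mulrA.
have /size_nonunit_factor/(_ bU) fb : g = b * (a * e) by rewrite gde dab mulrCA mulrA.
have [a0 b0] : a != 0 /\ b != 0 by apply/andP; rewrite -negb_or -mulf_eq0 -dab.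
move: df f_nonconst fa fb; rewrite dab size_mul //.
by move: (size a) (size b) (size f) => x y z; lia.
Qed.

Lemma comp_X2_splits : ~ irreducibleZ g -> splits_in_two g.
Proof.
move=> g_red.
have [d [e [gde dU eU]]] : exists d e, [/\ g = d * e, d \isn't a GRing.unit
                                               & e \isn't a GRing.unit].
  apply: NNPP => no_split; apply: g_red; split; first exact: comp_X2_neq0.
    apply/negP => /size_poly_unit; rewrite size_comp_X2.
    by have := f_nonconst; move: (size f) => n; lia.
  move=> d e gde; apply: NNPP => /not_or_and[/negP dU /negP eU].
  by apply: no_split; exists d, e.
have ged : g = e * d by rewrite mulrC.
have fd := size_nonunit_factor gde dU; have fe := size_nonunit_factor ged eU.
have [d0 e0] : d != 0 /\ e != 0 by apply/andP; rewrite -negb_or -mulf_eq0 -gde comp_X2_neq0.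
have := size_comp_X2; rewrite gde size_mul // => size_de.
have [df ef] : size d = size f /\ size e = size f.
  by move: size_de fd fe; have := f_nonconst; move: (size d) (size e) (size f) => x y z; lia.
exists d, e; split; rewrite ?df ?ef //.
- exact: nonunit_factor_irreducible gde dU df.
- exact: nonunit_factor_irreducible ged eU ef.
Qed.

End CompX2.

Lemma QM_of_intpoly_mul (q r : {poly int}) :
  QM_eq (QM_of_intpoly (q * r)) (QM_mul (QM_of_intpoly q) (QM_of_intpoly r)).
Proof. by apply: (@QM_eq_at _ _ 0) => //; rewrite QM_at_mul // /QM_at /= !liftp0 rmorphM. Qed.

Lemma QM_of_intpoly_unitP (R : {poly int}) :
  QM_unit (QM_of_intpoly R) <-> (size R == 1%N).
Proof. by rewrite QM_unitP /= size_rat_int_poly. Qed.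

Lemma map_poly_comp_X2n (R : {poly int}) k :
  map_poly (intr : int -> rat) (R \Po 'X^(2 ^ k)) = liftp k (map_poly intr R).
Proof. by rewrite map_comp_poly /= map_polyXn. Qed.

Lemma QM_atomic_of_comp_X2 (R : {poly int}) :
  QM_atomic (QM_of_intpoly (R \Po 'X^2)) -> QM_atomic (QM_of_intpoly R).
Proof. by move=> R2; apply: QM_atomic_liftp1; rewrite -map_poly_comp_X2n expn1. Qed.

Lemma QM_irreducible_of_comp_X2n (Q : {poly int}) : (1 < size Q)%N ->
  (forall k, irreducibleZ (Q \Po 'X^(2 ^ k))) -> QM_irreducible (QM_of_intpoly Q).
Proof.
move=> Q1 Q_irr; split.
- by move/QM_eq0P => /= Q0; move: Q1; rewrite -size_rat_int_poly Q0 size_poly0.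
- by move/QM_of_intpoly_unitP; rewrite gtn_eqF.
- move=> b c /QM_eqP/(_ (maxn b.1 c.1) (leq0n _) (leqnn _)).
  rewrite QM_at_mul ?leq_maxl ?leq_maxr // /QM_at subn0 /= -map_poly_comp_X2n.
  set N := maxn b.1 c.1 => Qbc.
  have QN1 : (1 < size (Q \Po 'X^(2 ^ N)))%N.
    have := size_comp_poly Q 'X^(2 ^ N); rewrite size_polyXn /=.
    by move=> e; rewrite -ltn_predRL e muln_gt0 expn_gt0 andbT ltn_predRL.
  have [] := irredp_mul_size1 (irreducibleZ_irredp_rat (Q_irr N) QN1) Qbc.
    by left; apply/QM_unitP; rewrite -(size_liftp_eq1 (N - b.1)); apply/eqP.
  by right; apply/QM_unitP; rewrite -(size_liftp_eq1 (N - c.1)); apply/eqP.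
Qed.

Lemma QM_atomic_of_comp_X2n (Q : {poly int}) :
  (forall k, irreducibleZ (Q \Po 'X^(2 ^ k))) -> QM_atomic (QM_of_intpoly Q).
Proof.
move=> Q_irr; have [Q0 _ _] := Q_irr 0%N; rewrite expn0 expr1 comp_polyXr in Q0.
have [Q1|Q1] := leqP (size Q) 1.
  by left; apply/QM_of_intpoly_unitP; rewrite eqn_leq Q1 size_poly_gt0.
exact/QM_atomic_irreducible/QM_irreducible_of_comp_X2n.
Qed.

Definition splitting_step (R R' : {poly int}) : Prop :=
  (irreducibleZ R -> R' = R \Po 'X^2) /\
  (~ irreducibleZ R ->
     exists q r : {poly int}, [/\ irreducibleZ q, irreducibleZ r, R = q * r & R' = q]).

Definition nonatomic_stage (R : {poly int}) : Prop :=
  ~ QM_atomic (QM_of_intpoly R) /\ (irreducibleZ R \/ splits_in_two R).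

Lemma splits_in_two_reducible R : splits_in_two R -> ~ irreducibleZ R.
Proof.
move=> [q [r [_ _ Rqr q1 r1]]] [_ _ /(_ _ _ Rqr)].
by case=> /size_poly_unit qr1; [rewrite qr1 in q1 | rewrite qr1 in r1].
Qed.

Lemma nonatomic_size (R : {poly int}) : R != 0 -> ~ QM_atomic (QM_of_intpoly R) ->
  (1 < size R)%N.
Proof.
move=> R0 naR; rewrite ltnNge; apply/negP => R1; apply: naR; left.
by apply/QM_of_intpoly_unitP; rewrite eqn_leq R1 size_poly_gt0.
Qed.

Lemma nonatomic_stage_step R :
  nonatomic_stage R -> exists R', splitting_step R R' /\ nonatomic_stage R'.
Proof.
move=> [naR [R_irr|R_split]].
  have R1 : (1 < size R)%N by case: R_irr => R0 _ _; exact: nonatomic_size.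
  exists (R \Po 'X^2); split; first by split=> // /(_ R_irr).
  split; first by move/QM_atomic_of_comp_X2.
  by have [|/(comp_X2_splits R_irr R1)] := classic (irreducibleZ (R \Po 'X^2)); [left|right].
have R_red := splits_in_two_reducible R_split.
have [q [r [q_irr r_irr Rqr q1 r1]]] := R_split.
have nonunit (p : {poly int}) : (1 < size p)%N -> ~ QM_unit (QM_of_intpoly p).
  by move=> p1 /QM_of_intpoly_unitP; rewrite gtn_eqF.
have [naq|nar] : ~ QM_atomic (QM_of_intpoly q) \/ ~ QM_atomic (QM_of_intpoly r).
  apply: NNPP => /not_or_and[/NNPP aq /NNPP ar]; apply: naR; rewrite Rqr.
  apply: QM_atomic_eq (QM_eq_sym (QM_of_intpoly_mul q r)) _.
  exact: QM_atomic_mul aq ar (nonunit _ q1) (nonunit _ r1).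
- by exists q; split; [split=> // _; exists q, r | split=> //; left].
- by exists r; split; [split=> // _; exists r, q; rewrite mulrC | split=> //; left].
Qed.

Lemma dependent_choice (T : Type) (I : T -> Prop) (S : T -> T -> Prop) (x0 : T) :
  I x0 -> (forall x, I x -> exists y, S x y /\ I y) ->
  exists u : nat -> T, u 0%N = x0 /\ forall n, I (u n) /\ S (u n) (u n.+1).
Proof.
move=> Ix0 step.
have next_ex x : exists y, I x -> S x y /\ I y.
  by have [/step[y]|nIx] := classic (I x); [exists y | exists x].
pose next x := proj1_sig (constructive_indefinite_description _ (next_ex x)).
have nextP x : I x -> S x (next x) /\ I (next x).
  exact: proj2_sig (constructive_indefinite_description _ (next_ex x)).
pose u n := iter n next x0.
have Iu n : I (u n) by elim: n => // n /nextP[].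
by exists u; split=> // n; split=> //; case: (nextP _ (Iu n)).
Qed.

Lemma splitting_step_irreducible_iter (Ps : nat -> {poly int}) N :
  (forall n, splitting_step (Ps n) (Ps n.+1)) ->
  (forall k, irreducibleZ (Ps (N + k)%N)) ->
  forall k, Ps (N + k)%N = Ps N \Po 'X^(2 ^ k).
Proof.
move=> step irr; elim=> [|k IH]; first by rewrite addn0 expn0 expr1 comp_polyXr.
rewrite addnS ((step _).1 (irr k)) IH -comp_polyA comp_Xn_poly -exprM.
by rewrite expnS mulnC.
Qed.

Theorem proposition4p5 (P : {poly int}) :
  irreducibleZ P -> ~ QM_atomic (QM_of_intpoly P) ->
  exists Ps : nat -> {poly int},
    splitting_sequence P Ps /\
    (forall N : nat, exists n : nat, (N <= n)%N /\ letter_is_S Ps n).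
Proof.
move=> P_irr naP.
have [Ps [Ps0 PsP]] := dependent_choice (conj naP (or_introl P_irr)) nonatomic_stage_step.
have step n : splitting_step (Ps n) (Ps n.+1) by case: (PsP n).
exists Ps; split=> [//|N]; apply: NNPP => noS.
have irr k : irreducibleZ (Ps (N + k)%N).
  by apply: NNPP => red; apply: noS; exists (N + k)%N; rewrite leq_addr.
have [[naN _] _] := PsP N; apply: naN; apply: QM_atomic_of_comp_X2n => k.
by rewrite -splitting_step_irreducible_iter.
Qed.
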